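(* A $\mathsf{BST}$-conjunction $\Phi$ is satisfiable if and only if there is a map $\mathfrak F:V\to\mathcal P(\mathcal P^+(V))$, where $V=\mathrm{Vars}(\Phi)$ and $\mathcal P^+(V)=\mathcal P(V)\setminus\{\emptyset\}$, such that (a) $\mathfrak F(x)=\mathfrak F(y)\star\mathfrak F(z)$ for every conjunct $x=y\star z$ of $\Phi$ with $\star\in\{\cup,\setminus\}$, and (b) $\mathfrak F(x)\neq\mathfrak F(y)$ for every conjunct $x\neq y$ of $\Phi$.
   Context: Sets range over the von Neumann universe of well-founded sets. A $\mathsf{BST}$-conjunction is a finite conjunction of literals of the forms $x=y\cup z$, $x=y\setminus z$, $x\neq y$ with $x,y,z$ set variables; it is satisfiable if some set assignment $M$ on its variables makes all literals true when each variable $v$ is interpreted as $Mv$. $\mathcal P(\cdot)$ denotes the power set. *)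

(* sets are modelled by
   Aczel's well-founded sets-as-trees with extensional equality. *)
From Stdlib Require List.
From mathcomp Require Import all_boot.
Set Implicit Arguments. Unset Strict Implicit. Unset Printing Implicit Defensive.

Inductive Ens : Type := sup : forall A : Type, (A -> Ens) -> Ens.

Fixpoint EQ (x y : Ens) {struct x} : Prop :=
  match x, y with
  | sup A f, sup B g =>
      (forall a : A, exists b : B, EQ (f a) (g b)) /\
      (forall b : B, exists a : A, EQ (f a) (g b))
  end.

Definition IN (w y : Ens) : Prop :=
  match y with sup B g => exists b : B, EQ w (g b) end.

Inductive lit (T : Type) : Type :=
  | LUnion of T & T & T   (* x = y \cup z *)
  | LDiff  of T & T & T   (* x = y \setminus z *)
  | LNeq   of T & T.

Definition conj (T : Type) := seq (lit T).

Definition lit_vars (T : Type) (l : lit T) : seq T :=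
  match l with
  | LUnion x y z => [:: x; y; z]
  | LDiff x y z => [:: x; y; z]
  | LNeq x y => [:: x; y]
  end.

Definition Vars (T : finType) (Phi : conj T) : {set T} :=
  [set v | v \in flatten (map (@lit_vars T) Phi)].

Definition holds (T : Type) (M : T -> Ens) (l : lit T) : Prop :=
  match l with
  | LUnion x y z => forall w, IN w (M x) <-> (IN w (M y) \/ IN w (M z))
  | LDiff x y z => forall w, IN w (M x) <-> (IN w (M y) /\ ~ IN w (M z))
  | LNeq x y => ~ EQ (M x) (M y)
  end.

Definition satisfiable (T : Type) (Phi : conj T) : Prop :=
  exists M : T -> Ens, forall l, List.In l Phi -> holds M l.

(* F : V -> P(P^+(V)), given as a map on T whose values at variables of Phi
   are families of nonempty subsets of V; values outside V are irrelevant. *)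
Definition good_map (T : finType) (Phi : conj T) (F : T -> {set {set T}}) : Prop :=
  (forall x, x \in Vars Phi -> forall S, S \in F x -> S \subset Vars Phi /\ S != set0) /\
  (forall l, List.In l Phi ->
     match l with
     | LUnion x y z => F x = F y :|: F z
     | LDiff x y z => F x = F y :\: F z
     | LNeq x y => F x <> F y
     end).

From mathcomp Require Import all_boot.
From Stdlib Require Import Classical ClassicalEpsilon.
Set Implicit Arguments. Unset Strict Implicit.

(* A set assignment M and a map F : V -> P(P^+(V)) are two
   descriptions of the same Venn diagram.
   (=>) Given M, every set w has a "Venn region" region w, the set of variables
   v of V with w in M v; put F x := { region w | w in M x }.  The regions are
   nonempty subsets of V, and since for v in V we have region w in F v iff
   w in M v, union, difference and (via extensionality) disequality literals
   transfer from M to F.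
   (<=) Given F, code each S : {set T} by a set code S, injectively up to
   extensional equality (Zermelo numerals of pickle S), and let M x be the set
   of the codes of the members of F x.  Membership in M x is then exactly
   membership of the decoded S in F x, so the literals transfer back. *)

(* A classical boolean reflection of an arbitrary proposition, needed to
   define finite sets by set-theoretic conditions. *)
Definition classicb (P : Prop) : bool :=
  if excluded_middle_informative P then true else false.

Lemma classicbP (P : Prop) : reflect P (classicb P).
Proof. by rewrite /classicb; case: excluded_middle_informative => h; constructor. Qed.

Lemma EQ_refl (x : Ens) : EQ x x.
Proof. elim: x => A f IH /=; split=> a; exists a; exact: IH. Qed.

Lemma EQ_sym (x y : Ens) : EQ x y -> EQ y x.
Proof.
elim: x y => A f IH [B g] /= [H1 H2]; split.
- by move=> b; case: (H2 b) => a h; exists a; apply: IH.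
- by move=> a; case: (H1 a) => b h; exists b; apply: IH.
Qed.

Lemma EQ_ext (X Y : Ens) : ~ EQ X Y ->
  exists w, (IN w X /\ ~ IN w Y) \/ (IN w Y /\ ~ IN w X).
Proof.
case: X => A f; case: Y => B g /= nXY.
case: (classic (forall a, exists b, EQ (f a) (g b))) => [XY|].
- have /not_all_ex_not [b Hb] : ~ (forall b, exists a, EQ (f a) (g b)).
    by move=> YX; apply: nXY.
  exists (g b); right; split; first by exists b; apply: EQ_refl.
  by move=> [a h]; apply: Hb; exists a; apply: EQ_sym.
- move=> /not_all_ex_not [a Ha]; exists (f a); left; split=> //.
  by exists a; apply: EQ_refl.
Qed.

Fixpoint zermelo (n : nat) : Ens :=
  match n with
  | 0 => sup (fun e : Empty_set => match e with end)
  | k.+1 => sup (fun _ : unit => zermelo k)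
  end.

Lemma zermelo_inj (n m : nat) (w : Ens) :
  EQ w (zermelo n) -> EQ w (zermelo m) -> n = m.
Proof.
elim: n m w => [|n IH] [|m] [A f] //=.
- by move=> [H1 _] [_ H2]; case: (H2 tt) => a _; case: (H1 a).
- by move=> [_ H2] [H1 _]; case: (H2 tt) => a _; case: (H1 a).
- move=> [_ H1] [H2 _]; case: (H1 tt) => a ha; case: (H2 a) => _ hb.
  by rewrite (IH m (f a)).
Qed.

Lemma lit_in_Vars (T : finType) (Phi : conj T) (l : lit T) (v : T) :
  List.In l Phi -> v \in lit_vars l -> v \in Vars Phi.
Proof.
rewrite /Vars inE; elim: Phi => [|a P IH] //= [->|h] hv; rewrite mem_cat.
- by rewrite hv.
- by rewrite IH ?orbT.
Qed.

Section SetsToFamilies.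
Variables (T : finType) (V : {set T}) (M : T -> Ens).

Definition region (w : Ens) : {set T} := [set v in V | classicb (IN w (M v))].

Definition family (x : T) : {set {set T}} :=
  [set S | classicb (exists w, IN w (M x) /\ S = region w)].

Lemma mem_region (w : Ens) (v : T) : v \in V -> (v \in region w) <-> IN w (M v).
Proof. by move=> vV; rewrite inE vV; split=> /classicbP. Qed.

Lemma familyP (x : T) (S : {set T}) :
  S \in family x <-> exists w, IN w (M x) /\ S = region w.
Proof. by rewrite inE; split=> /classicbP. Qed.

Lemma region_in_family (v : T) (w : Ens) :
  v \in V -> region w \in family v <-> IN w (M v).
Proof.
move=> vV; split; last by move=> Hw; apply/familyP; exists w.
by move/familyP=> [w' [Hw' E]]; apply/(mem_region _ vV); rewrite E mem_region.
Qed.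

Lemma family_sub (x : T) (S : {set T}) :
  x \in V -> S \in family x -> S \subset V /\ S != set0.
Proof.
move=> xV /familyP [w [Hw ->]]; split.
- by apply/subsetP => v; rewrite inE => /andP [].
- by apply/set0Pn; exists x; apply/mem_region.
Qed.

Lemma family_union (x y z : T) :
  (forall w, IN w (M x) <-> IN w (M y) \/ IN w (M z)) ->
  family x = family y :|: family z.
Proof.
move=> H; apply/setP => S; rewrite in_setU; apply/idP/orP.
- move/familyP=> [w [Hw ->]].
  by case: ((H w).1 Hw) => h; [left|right]; apply/familyP; exists w.
- by case=> /familyP [w [Hw ->]]; apply/familyP; exists w; split=> //; apply/(H w); tauto.
Qed.

Lemma family_diff (x y z : T) : z \in V ->
  (forall w, IN w (M x) <-> IN w (M y) /\ ~ IN w (M z)) ->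
  family x = family y :\: family z.
Proof.
move=> zV H; apply/setP => S; rewrite in_setD; apply/idP/andP.
- move/familyP=> [w [Hw ->]]; case: ((H w).1 Hw) => hy hz; split.
  + by apply/negP => /(region_in_family _ zV).
  + by apply/familyP; exists w.
- case=> /negP hz /familyP [w [Hw ESw]]; subst S.
  apply/familyP; exists w; split=> //; apply/(H w); split=> // hzw.
  by apply: hz; apply/(region_in_family _ zV).
Qed.

Lemma family_neq (x y : T) : x \in V -> y \in V ->
  ~ EQ (M x) (M y) -> family x <> family y.
Proof.
move=> xV yV /EQ_ext [w [[hx hy]|[hy hx]]] E.
- by apply: hy; apply/(region_in_family _ yV); rewrite -E; apply/region_in_family.
- by apply: hx; apply/(region_in_family _ xV); rewrite E; apply/region_in_family.
Qed.

End SetsToFamilies.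

Section FamiliesToSets.
Variables (T : finType) (F : T -> {set {set T}}).

Definition code (S : {set T}) : Ens := zermelo (pickle S).

Lemma code_inj (S S' : {set T}) (w : Ens) :
  EQ w (code S) -> EQ w (code S') -> S = S'.
Proof. by move=> h h'; apply: (pcan_inj (@pickleK_inv _)); apply: zermelo_inj h h'. Qed.

Definition realize (x : T) : Ens :=
  sup (fun s : {S : {set T} | S \in F x} => code (val s)).

Lemma IN_realize (w : Ens) (x : T) :
  IN w (realize x) <-> exists2 S, S \in F x & EQ w (code S).
Proof.
split; first by move=> [[S HS] H]; exists S.
by move=> [S HS H]; exists (exist _ S HS).
Qed.

Lemma code_in_realize (w : Ens) (x : T) (S : {set T}) :
  EQ w (code S) -> IN w (realize x) <-> S \in F x.
Proof.
move=> hS; rewrite IN_realize; split; last by exists S.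
by move=> [S' HS' hS']; rewrite (code_inj hS hS').
Qed.

Lemma realize_union (x y z : T) : F x = F y :|: F z ->
  forall w, IN w (realize x) <-> IN w (realize y) \/ IN w (realize z).
Proof.
move=> E w; split.
- by move=> /IN_realize [S]; rewrite E inE => /orP [] HS h;
    [left|right]; apply/(code_in_realize _ h).
- by case=> /IN_realize [S HS h]; apply/(code_in_realize _ h); rewrite E inE HS ?orbT.
Qed.

Lemma realize_diff (x y z : T) : F x = F y :\: F z ->
  forall w, IN w (realize x) <-> IN w (realize y) /\ ~ IN w (realize z).
Proof.
move=> E w; split.
- move=> /IN_realize [S]; rewrite E inE => /andP [HSz HSy] h.
  rewrite !(code_in_realize _ h); split=> //; exact/negP.
- move=> [/IN_realize [S HS h]]; rewrite !(code_in_realize _ h) => /negP HSz.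
  by rewrite E inE HSz.
Qed.

Lemma realize_neq (x y : T) : F x <> F y -> ~ EQ (realize x) (realize y).
Proof.
move=> nE [E1 E2]; apply: nE; apply/setP => S; apply/idP/idP => HS.
- case: (E1 (exist _ S HS)) => [[S' HS']] /= h.
  by rewrite (code_inj (EQ_refl _) h).
- case: (E2 (exist _ S HS)) => [[S' HS']] /= h.
  by rewrite (code_inj h (EQ_refl _)).
Qed.

End FamiliesToSets.

Theorem mainTheorem16 (T : finType) (Phi : conj T) :
  satisfiable Phi <-> exists F : T -> {set {set T}}, good_map Phi F.
Proof.
split.
- move=> [M HM]; exists (family (Vars Phi) M); split.
    by move=> x xV S; apply: family_sub.
  move=> l Hl; have inV := lit_in_Vars Hl; have := HM l Hl.
  case: l Hl inV => [x y z|x y z|x y] _ inV /=.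
  + exact: family_union.
  + by apply: family_diff; apply: inV; rewrite !inE eqxx !orbT.
  + by apply: family_neq; apply: inV; rewrite !inE eqxx ?orbT.
- move=> [F [_ HF]]; exists (realize F) => l Hl; have := HF l Hl.
  case: l Hl => [x y z|x y z|x y] _ /=.
  + exact: realize_union.
  + exact: realize_diff.
  + exact: realize_neq.
Qed.
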